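(* Let $X$ be a set. For every $\mathcal F\subseteq[0,1]^X$, \[\gamma_S(\alpha_S(\mathcal F))=\{\mathrm{op}\circ\langle\mathcal F\rangle\mid\mathrm{op}\colon[0,1]^{\mathcal F}\to[0,1]\text{ non-expansive w.r.t. the directed sup-metric}\},\] and $\alpha_S(\gamma_S(d))=d$ for every directed pseudo-metric $d$ on $X$.
   Context: $r\ominus s=\max\{0,r-s\}$, $r\oplus s=\min\{r+s,1\}$. A directed pseudo-metric on $X$ is $d\colon X\times X\to[0,1]$ with $d(x,x)=0$ and $d(x,z)\le d(x,y)\oplus d(y,z)$. $\alpha_S(\mathcal F)(x_1,x_2)=\bigvee_{f\in\mathcal F}(f(x_1)\ominus f(x_2))$; $\gamma_S(d)=\{f\in[0,1]^X\mid\forall x_1,x_2\colon f(x_1)\ominus f(x_2)\le d(x_1,x_2)\}$. $\langle\mathcal F\rangle\colon X\to[0,1]^{\mathcal F}$, $\langle\mathcal F\rangle(x)(f)=f(x)$. The directed sup-metric on $[0,1]^{\mathcal F}$ is $(u,v)\mapsto\sup_{f\in\mathcal F}(u(f)\ominus v(f))$, and $\mathrm{op}$ is non-expansive w.r.t. it if $\mathrm{op}(u)\ominus\mathrm{op}(v)\le\sup_{f}(u(f)\ominus v(f))$ for all $u,v$. *)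

From HB Require Import structures.
From mathcomp Require Import all_boot all_order all_algebra.
From mathcomp Require Import boolp classical_sets reals.
Set Implicit Arguments. Unset Strict Implicit. Unset Printing Implicit Defensive.
Import Order.TTheory GRing.Theory Num.Theory.
Local Open Scope ring_scope.
Local Open Scope classical_set_scope.

Section Defs.
Variable R : realType.

Definition monus (r s : R) : R := Num.max 0 (r - s).
Definition oplus (r s : R) : R := Num.min (r + s) 1.

Definition in01 (r : R) : Prop := 0 <= r <= 1.

(* [0,1]^T, as real-valued functions with values in [0,1] *)
Definition unitfun (T : Type) (f : T -> R) : Prop := forall t, in01 (f t).

Definition directed_pseudometric (X : Type) (d : X -> X -> R) : Prop :=
  (forall x y, in01 (d x y)) /\ (forall x, d x x = 0) /\
  (forall x y z, d x z <= oplus (d x y) (d y z)).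

(* alpha_S(F)(x1,x2) = \/_{f in F} (f x1 ⊖ f x2); the join in [0,1] of the
   empty family is 0 = sup set0 *)
Definition alphaS (X : Type) (F : set (X -> R)) : X -> X -> R :=
  fun x1 x2 => sup [set monus (f x1) (f x2) | f in F].

Definition gammaS (X : Type) (d : X -> X -> R) : set (X -> R) :=
  [set f | unitfun f /\ forall x1 x2, monus (f x1) (f x2) <= d x1 x2].

Definition tupling (X : Type) (F : set (X -> R)) : X -> ({f : X -> R | F f} -> R) :=
  fun x f => (proj1_sig f) x.

Definition dsup (T : Type) (u v : T -> R) : R :=
  sup [set monus (u t) (v t) | t in [set: T]].

Definition nonexp_op (T : Type) (op : (T -> R) -> R) : Prop :=
  (forall u, unitfun u -> in01 (op u)) /\
  (forall u v, unitfun u -> unitfun v -> monus (op u) (op v) <= dsup u v).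

End Defs.

From HB Require Import structures.
From mathcomp Require Import all_boot all_order all_algebra.
From mathcomp Require Import boolp classical_sets reals.
From mathcomp Require Import lra.
Set Implicit Arguments. Unset Strict Implicit. Unset Printing Implicit Defensive.
Import Order.TTheory GRing.Theory Num.Theory.
Local Open Scope ring_scope.
Local Open Scope classical_set_scope.

(* The directed sup-metric pulls back along <F> to alpha_S(F), so every
   op o <F> with op non-expansive lies in gamma_S(alpha_S(F)).  Conversely,
   g in gamma_S(alpha_S(F)) factors through the McShane-type extension
   op(u) = sup_x (g x ⊖ dsup(<F> x, u)), which is non-expansive by the
   triangle inequality for dsup and restricts to g along <F>.  Finally
   alpha_S(gamma_S(d)) = d because the distance functions d(-, y) belong to
   gamma_S(d) (triangle inequality) and attain d(x, y) at x. *)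

Section Monus.
Variable R : realType.

Lemma monus_le (r s b : R) : 0 <= b -> r - s <= b -> monus r s <= b.
Proof. by move=> b0 rsb; rewrite /monus ge_max b0 rsb. Qed.

Lemma subr_le_monus (r s : R) : r - s <= monus r s.
Proof. by rewrite /monus le_max lexx orbT. Qed.

Lemma monus_ge0 (r s : R) : 0 <= monus r s.
Proof. by rewrite /monus le_max lexx. Qed.

Lemma monus_le1 (r s : R) : in01 r -> in01 s -> monus r s <= 1.
Proof. by move=> /andP[r0 r1] /andP[s0 s1]; apply: monus_le => //; lra. Qed.

Lemma oplus_le_add (r s : R) : oplus r s <= r + s.
Proof. by rewrite /oplus ge_min lexx. Qed.

End Monus.

Section SupImage.
Variables (R : realType) (T : Type) (h : T -> R) (A : set T).

(* [0 <= b] replaces non-emptiness of [A], since [sup set0 = 0]. *)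
Lemma sup_image_le (b : R) :
  0 <= b -> (forall t, A t -> h t <= b) -> sup (h @` A) <= b.
Proof.
move=> b0 hb; have [[t At]|A0] := pselect (A !=set0).
  by apply: ge_sup => [|_ [s As <-]]; [exists (h t), t | apply: hb].
suff -> : A = set0 by rewrite image_set0 sup0.
by apply/seteqP; split=> // s As; apply: A0; exists s.
Qed.

Lemma sup_image_ge0 : (forall t, A t -> 0 <= h t) -> 0 <= sup (h @` A).
Proof.
move=> h0; have [hs|/sup_out -> //] := pselect (has_sup (h @` A)).
have [[_ [t At _]] _] := hs.
by apply: le_trans (h0 t At) _; apply: sup_upper_bound => //; exists t.
Qed.

End SupImage.

Section DirectedSupMetric.
Variables (R : realType) (T : Type).
Implicit Types u v w : T -> R.

Lemma dsup_ge0 u v : 0 <= dsup u v.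
Proof. by apply: sup_image_ge0 => t _; apply: monus_ge0. Qed.

Lemma le_dsup u v t : unitfun u -> unitfun v -> monus (u t) (v t) <= dsup u v.
Proof.
move=> u01 v01; apply: ub_le_sup; last by exists t.
by exists 1 => _ [s _ <-]; apply: monus_le1.
Qed.

Lemma dsup_triangle u v w : unitfun u -> unitfun v -> unitfun w ->
  dsup u w <= dsup u v + dsup v w.
Proof.
move=> u01 v01 w01; have uvw0 := addr_ge0 (dsup_ge0 u v) (dsup_ge0 v w).
apply: sup_image_le => // t _; apply: monus_le => //.
have := le_dsup t u01 v01; have := le_dsup t v01 w01.
have := subr_le_monus (u t) (v t); have := subr_le_monus (v t) (w t); lra.
Qed.

Lemma dsup_id u : dsup u u = 0.
Proof.
apply/le_anti; rewrite dsup_ge0 andbT.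
by apply: sup_image_le => // t _; apply: monus_le => //; rewrite subrr.
Qed.

End DirectedSupMetric.

Section Tupling.
Variables (R : realType) (X : Type) (F : set (X -> R)).

Lemma dsup_tupling x1 x2 : dsup (@tupling R X F x1) (tupling x2) = alphaS F x1 x2.
Proof.
rewrite /dsup /alphaS; congr sup; apply/seteqP; split=> r /=.
  by move=> [[f Ff] _ <-]; exists f.
by move=> [f Ff <-]; exists (exist _ f Ff).
Qed.

Lemma unitfun_tupling x : F `<=` @unitfun R X -> unitfun (@tupling R X F x).
Proof. by move=> F01 [f Ff]; apply: F01. Qed.

Lemma gammaS_alphaS_comp_tupling (op : ({f : X -> R | F f} -> R) -> R) :
  F `<=` @unitfun R X -> nonexp_op op -> gammaS (alphaS F) (fun x => op (tupling x)).
Proof.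
move=> F01 [op01 op_nonexp]; split=> [x|x1 x2].
  exact/op01/unitfun_tupling.
by rewrite -dsup_tupling; apply: op_nonexp; apply: unitfun_tupling.
Qed.

Section Extension.
Variable g : X -> R.
Hypothesis g01 : unitfun g.

Definition extension_op (u : {f : X -> R | F f} -> R) : R :=
  sup [set monus (g x) (dsup (@tupling R X F x) u) | x in [set: X]].

Let g_monus_dsup_le1 u x : monus (g x) (dsup (@tupling R X F x) u) <= 1.
Proof.
have := dsup_ge0 (@tupling R X F x) u; have /andP[_ gx1] := g01 x.
by move=> ?; apply: monus_le => //; lra.
Qed.

Lemma le_extension_op u x :
  monus (g x) (dsup (@tupling R X F x) u) <= extension_op u.
Proof.
apply: ub_le_sup; last by exists x.
by exists 1 => _ [y _ <-]; apply: g_monus_dsup_le1.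
Qed.

Lemma extension_op_ge0 u : 0 <= extension_op u.
Proof. by apply: sup_image_ge0 => x _; apply: monus_ge0. Qed.

Lemma nonexp_extension_op : F `<=` @unitfun R X -> nonexp_op extension_op.
Proof.
move=> F01; split=> [u _|u v u01 v01].
  by rewrite /in01 extension_op_ge0 /=; apply: sup_image_le => // x _.
apply: monus_le; first exact: dsup_ge0.
suff : extension_op u <= dsup u v + extension_op v by lra.
have uv0 := addr_ge0 (dsup_ge0 u v) (extension_op_ge0 v).
apply: sup_image_le => // x _; apply: monus_le => //.
have := dsup_triangle (unitfun_tupling x F01) u01 v01.
have := le_extension_op v x; have := subr_le_monus (g x) (dsup (tupling x) v); lra.
Qed.

Lemma extension_op_tupling : gammaS (alphaS F) g ->
  (fun x => extension_op (tupling x)) = g.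
Proof.
move=> [_ g_alpha]; apply/funext=> y; apply/le_anti/andP; split.
  have /andP[gy0 _] := g01 y.
  apply: sup_image_le => // x _; apply: monus_le => //.
  by rewrite dsup_tupling; have := g_alpha x y; have := subr_le_monus (g x) (g y); lra.
have := le_extension_op (tupling y) y; rewrite dsup_id.
by have := subr_le_monus (g y) 0; lra.
Qed.

End Extension.

Lemma gammaS_alphaS : F `<=` @unitfun R X ->
  gammaS (alphaS F) =
  [set g | exists op : ({f : X -> R | F f} -> R) -> R,
             nonexp_op op /\ g = (fun x => op (tupling x))].
Proof.
move=> F01; apply/seteqP; split=> g /=.
  move=> g_gamma; have g01 := g_gamma.1.
  exists (extension_op g); split; first exact: nonexp_extension_op.
  by rewrite extension_op_tupling.
by move=> [op [op_nonexp ->]]; apply: gammaS_alphaS_comp_tupling.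
Qed.

End Tupling.

Section PseudoMetric.
Variables (R : realType) (X : Type) (d : X -> X -> R).
Hypothesis d_pm : directed_pseudometric d.

Lemma gammaS_dist_to y : gammaS d (d^~ y).
Proof.
have [d01 [_ d_tri]] := d_pm; split=> [x|x1 x2]; first exact: d01.
have /andP[d0 _] := d01 x1 x2; apply: monus_le => //.
by have := d_tri x1 x2 y; have := oplus_le_add (d x1 x2) (d x2 y); lra.
Qed.

Lemma alphaS_gammaS : alphaS (gammaS d) = d.
Proof.
have [d01 [d_id _]] := d_pm.
apply/funext=> x1; apply/funext=> x2; apply/le_anti/andP; split.
  by have /andP[d0 _] := d01 x1 x2; apply: sup_image_le => // f [].
have := subr_le_monus (d x1 x2) (d x2 x2); rewrite d_id subr0 => /le_trans; apply.
apply: ub_le_sup; first by exists 1 => _ [f [f01 _] <-]; apply: monus_le1.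
by exists (d^~ x2); [apply: gammaS_dist_to | rewrite d_id].
Qed.

End PseudoMetric.

Theorem mainTheorem13 (R : realType) (X : Type) :
  (forall F : set (X -> R), F `<=` (@unitfun R X) ->
     gammaS (alphaS F) =
     [set g | exists op : ({f : X -> R | F f} -> R) -> R,
                nonexp_op op /\ g = (fun x => op (tupling x))]) /\
  (forall d : X -> X -> R, directed_pseudometric d -> alphaS (gammaS d) = d).
Proof. by split=> [F|d]; [apply: gammaS_alphaS | apply: alphaS_gammaS]. Qed.
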